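(* Let $\Delta$ be a simplicial complex on vertex set $[n]$. Then there is a collection $\mathcal{X}=(X_1,\dots,X_n)$ of discrete subsets of $\mathbb{R}$, each containing $0$, such that $\Delta=\Delta(\mathcal{X};\mu)$ for some $\mu\in\mathbb{R}$. Moreover, there is a collection $\mathcal{X}=(X_1,\dots,X_n)$ of contractible subsets of $\mathbb{R}^2$, each containing the origin, and a point $\mu\in\mathbb{R}^2$ with $\Delta=\Delta(\mathcal{X};\mu)$.
   Context: For arbitrary sets $X_1,\dots,X_n\subseteq\mathbb{R}^d$ containing the origin and $\sigma\subseteq[n]$, write $X_\sigma=\sum_{i\in\sigma}X_i=\{\sum_{i\in\sigma}x_i: x_i\in X_i\}$ (Minkowski sum), with $X_\emptyset=\{0\}$. For $\mu\in\mathbb{R}^d$, the Minkowski complex $\Delta(\mathcal{X};\mu)$ is the simplicial complex on vertex set $[n]$ whose faces are the $\sigma\subseteq[n]$ with $\mu\notin X_\sigma$. *)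

From HB Require Import structures.
From mathcomp Require Import all_boot all_order all_algebra.
From mathcomp Require Import all_classical all_reals all_analysis.
Set Implicit Arguments. Unset Strict Implicit. Unset Printing Implicit Defensive.
Import Order.TTheory GRing.Theory Num.Theory.
Import numFieldNormedType.Exports.
Local Open Scope classical_set_scope.
Local Open Scope ring_scope.

Definition simplicial_complex (n : nat) (D : set {set 'I_n}) : Prop :=
  forall s t : {set 'I_n}, D s -> t \subset s -> D t.

Definition minkowski_sum (V : zmodType) (n : nat) (X : 'I_n -> set V)
    (sigma : {set 'I_n}) : set V :=
  [set v | exists x : 'I_n -> V,
     (forall i, i \in sigma -> X i (x i)) /\ v = \sum_(i in sigma) x i].

Definition minkowski_complex (V : zmodType) (n : nat) (X : 'I_n -> set V)
    (mu : V) : set {set 'I_n} :=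
  [set sigma | ~ minkowski_sum X sigma mu].

(* A discrete subset of R: every point of R has a neighbourhood meeting A in
   at most that point (i.e. A has no accumulation point; closed discrete). *)
Definition discrete_subset (R : realType) (A : set R) : Prop :=
  forall x : R, exists2 e : R, 0 < e &
    forall y, A y -> `|y - x| < e -> y = x.

Definition contractible_subset (R : realType) (T : topologicalType)
    (A : set T) : Prop :=
  exists2 a0 : T, A a0 &
  exists H : T * R -> T,
    [/\ {within A `*` [set` `[0%R, 1%R]], continuous H},
        (forall x t, A x -> t \in `[0%R, 1%R] -> A (H (x, t))),
        (forall x, A x -> H (x, 0%R) = x) &
        (forall x, A x -> H (x, 1%R) = a0)].

From HB Require Import structures.
From mathcomp Require Import all_boot all_order all_algebra.
From mathcomp Require Import all_classical all_reals all_analysis.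
From mathcomp Require Import zify lra.
Import Order.TTheory GRing.Theory Num.Theory.
Import numFieldNormedType.Exports.

Set Implicit Arguments.
Unset Strict Implicit.
Unset Printing Implicit Defensive.

(* Read a natural number in base n+1 as a marker digit at position n above
   digits indexed by the vertices.  Vertex i may contribute 0, the singleton
   {i}, or, for every non-face t containing i, one marker plus the complement
   of t minus i.  At most n numbers are added, so no digit ever carries: the
   target mu (all digits 1) is a sum over s exactly when the chosen pieces
   partition the marker and the vertices.  The marked piece then comes from a
   non-face t, and all of t must lie in s; conversely a non-face s is hit with
   t = s.  In the plane, gluing the open upper half-plane onto each X_i x {0}
   gives a star-shaped set, and as heights are nonnegative a sum at height 0
   only uses points of the axis. *)

Lemma base_digits_inj (B n M M' : nat) (c d : 'I_n -> nat) :
  (forall i, c i < B) -> (forall i, d i < B) ->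
  M * B ^ n + \sum_(i < n) c i * B ^ i = M' * B ^ n + \sum_(i < n) d i * B ^ i ->
  M = M' /\ c =1 d.
Proof.
elim: n M M' c d => [|n IHn] M M' c d cB dB.
  by rewrite !big_ord0 !expn0 !muln1 !addn0 => ->; split=> // -[].
have shift N e : N * B ^ n.+1 + \sum_(i < n.+1) e i * B ^ i =
    (N * B ^ n + \sum_(i < n) e (lift ord0 i) * B ^ i) * B + e ord0.
  rewrite big_ord_recl; under eq_bigr do rewrite lift0 expnS mulnCA.
  rewrite -big_distrr /= expn0 muln1 expnS.
  set S := \sum_(i < n) _; nia.
rewrite !shift => /(congr1 (edivn^~ B)); rewrite !edivn_eq // => -[].
move=> /IHn[//|//|-> cd] c0; split=> // i.
by case: (unliftP ord0 i) => [j ->|->].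
Qed.

Lemma sum_nat_neq0_exists (I : finType) (P : pred I) (E : I -> nat) :
  \sum_(i | P i) E i != 0 -> exists2 i, P i & E i != 0.
Proof.
rewrite sum_nat_eq0 => /forallPn[i]; rewrite negb_imply => /andP[Pi Ei].
by exists i.
Qed.

Section CodesOfCells.

Variables (n : nat) (D : set {set 'I_n}).
Hypothesis D_simplicial : simplicial_complex D.

Local Notation B := n.+1.

Definition code (m : nat) (A : {set 'I_n}) : nat :=
  m * B ^ n + \sum_(j < n) (j \in A) * B ^ j.

Definition cell (i : 'I_n) (m : nat) (A : {set 'I_n}) : Prop :=
  (m = 0 /\ A \subset [set i]) \/
  (m = 1 /\ exists t, [/\ ~ D t, i \in t & A = ~: (t :\ i)]).

Definition exact_cover (s : {set 'I_n}) (m : 'I_n -> nat)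
    (A : 'I_n -> {set 'I_n}) : Prop :=
  \sum_(i in s) m i = 1 /\ forall j : 'I_n, \sum_(i in s) (j \in A i) = 1.

Lemma sum_code (s : {set 'I_n}) (m : 'I_n -> nat) (A : 'I_n -> {set 'I_n}) :
  \sum_(i in s) code (m i) (A i) =
  (\sum_(i in s) m i) * B ^ n + \sum_(j < n) (\sum_(i in s) (j \in A i)) * B ^ j.
Proof.
rewrite big_split /= -big_distrl /=; congr (_ + _).
by rewrite exchange_big; apply: eq_bigr => j _; rewrite big_distrl.
Qed.

Lemma sum_code_setT (s : {set 'I_n}) (m : 'I_n -> nat) (A : 'I_n -> {set 'I_n}) :
  \sum_(i in s) code (m i) (A i) = code 1 [set: 'I_n] <-> exact_cover s m A.
Proof.
have codeT : code 1 [set: 'I_n] = 1 * B ^ n + \sum_(j < n) 1 * B ^ j.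
  by congr (_ + _); apply: eq_bigr => j _; rewrite inE.
rewrite sum_code codeT /exact_cover.
split=> [|[-> cover]]; last by under eq_bigr do rewrite cover.
have count_lt j : \sum_(i in s) (j \in A i) < B.
  have card_s : #|s| <= n by rewrite -[n in _ <= n]card_ord max_card.
  rewrite ltnS (leq_trans _ card_s) // -sum1_card.
  by apply: leq_sum => i _; case: (j \in A i).
have one_lt (j : 'I_n) : 1 < B by rewrite ltnS (leq_ltn_trans _ (ltn_ord j)).
by move=> /(base_digits_inj count_lt one_lt) [-> cover].
Qed.

Lemma exact_cover_nonface (s : {set 'I_n}) (m : 'I_n -> nat) (A : 'I_n -> {set 'I_n}) :
  (forall i, i \in s -> cell i (m i) (A i)) -> exact_cover s m A -> ~ D s.
Proof.
move=> cellA [sum_m cover].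
have [l ls ml] : exists2 l, l \in s & m l != 0 by apply: sum_nat_neq0_exists; rewrite sum_m.
have others i : i \in s :\ l -> m i = 0.
  have : \sum_(i in s :\ l) m i == 0 by move: sum_m ml; rewrite (big_setD1 l) //=; lia.
  by rewrite sum_nat_eq0 => /forall_inP others /others /eqP.
have [[ml0 _]|[_ [t [nDt lt Al]]]] := cellA l ls; first by rewrite ml0 in ml.
move=> Ds; apply: nDt; apply: D_simplicial Ds _; apply/fintype.subsetP => j jt.
have [-> // | jl] := eqVneq j l.
have [i si jAi] : exists2 i, i \in s & nat_of_bool (j \in A i) != 0.
  by apply: sum_nat_neq0_exists; rewrite cover.
have {}jAi : j \in A i by case: (j \in A i) jAi.
have il : i != l by apply: contraTneq jAi => ->; rewrite Al !inE jl jt.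
have [[_ Ai_sub] | [mi1 _]] := cellA i si.
  by move/fintype.subsetP/(_ j jAi): Ai_sub; rewrite inE => /eqP ->.
by rewrite others ?inE ?il in mi1.
Qed.

Lemma nonface_exact_cover (s : {set 'I_n}) (l : 'I_n) : l \in s -> ~ D s ->
  exists m A, (forall i, i \in s -> cell i (m i) (A i)) /\ exact_cover s m A.
Proof.
move=> ls nDs.
exists (fun i => nat_of_bool (i == l)),
  (fun i => if i == l then ~: (s :\ l) else [set i]).
split=> [i si|].
  by case: eqP => [->|_]; [right; split=> //; exists s | left].
have count1 (S : {set 'I_n}) (j : 'I_n) :
    \sum_(i in S) (j \in [set i]) = (j \in S) :> nat.
  have [jS|jS] := boolP (j \in S).
    rewrite (big_setD1 j) //= set11 big1 // => i /setD1P[ij _].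
    by rewrite inE eq_sym (negbTE ij).
  by rewrite big1 // => i iS; rewrite inE; case: eqP iS => // <-; rewrite (negbTE jS).
split=> [|j]; rewrite (big_setD1 l) //= eqxx.
  by rewrite big1 // => i /setD1P[/negbTE ->].
under eq_bigr => i /setD1P[/negbTE -> _] do [].
by rewrite count1 inE; case: (j \in s :\ l).
Qed.

Definition vertex_codes (i : 'I_n) : set nat :=
  [set k | exists m A, cell i m A /\ k = code m A].

Hypothesis D_set0 : D finset.set0.

Lemma sum_vertex_codesP (s : {set 'I_n}) :
  (exists k, (forall i, i \in s -> vertex_codes i (k i)) /\
             code 1 [set: 'I_n] = \sum_(i in s) k i) <-> ~ D s.
Proof.
split=> [[k [k_codes sum_k]]|nDs].
  have mA_ex i : exists mAi : nat * {set 'I_n}, i \in s ->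
      cell i mAi.1 mAi.2 /\ k i = code mAi.1 mAi.2.
    have [/k_codes[m [A mAi]]|_] := boolP (i \in s); first by exists (m, A).
    by exists (0, finset.set0).
  have [mA mA_cell] := choice mA_ex.
  have cells i : i \in s -> cell i (mA i).1 (mA i).2 by move=> /mA_cell[].
  apply: (exact_cover_nonface cells).
  by apply/sum_code_setT; rewrite sum_k; apply: eq_bigr => i /mA_cell[_].
have [s0 | [l ls]] := set_0Vmem s; first by rewrite s0 in nDs.
have [m [A [cellA /sum_code_setT sumA]]] := nonface_exact_cover ls nDs.
exists (fun i => code (m i) (A i)); split=> [i si|//].
by exists (m i), (A i); split=> //; apply: cellA.
Qed.

End CodesOfCells.

Local Open Scope classical_set_scope.
Local Open Scope ring_scope.

Lemma minkowski_complex0 (V : zmodType) (n : nat) (X : 'I_n -> set V) :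
  (forall i, X i 0) -> minkowski_complex X 0 = set0.
Proof.
move=> X0; apply/seteqP; split=> // s /= nsum; apply: nsum.
by exists (fun=> 0); split=> //; rewrite big1.
Qed.

Lemma minkowski_sum_natr (R : numDomainType) (n : nat) (K : 'I_n -> set nat)
    (s : {set 'I_n}) (N : nat) :
  minkowski_sum (fun i => (fun k : nat => k%:R : R) @` K i) s N%:R <->
  exists k : 'I_n -> nat,
    (forall i, i \in s -> K i (k i)) /\ N = (\sum_(i in s) k i)%N.
Proof.
split=> [[x [xK sum_x]]|[k [kK ->]]]; last first.
  exists (fun i => (k i)%:R); split=> [i /kK Kk|]; first by exists (k i).
  by rewrite natr_sum.
have k_ex i : exists k : nat, i \in s -> K i k /\ x i = k%:R.
  by have [/xK[k Kk <-]|_] := boolP (i \in s); [exists k | exists 0%N].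
have [k kK] := choice k_ex.
exists k; split=> [i /kK[] //|].
by apply/eqP; rewrite -(eqr_nat R) sum_x natr_sum; apply/eqP/eq_bigr => i /kK[_ ->].
Qed.

Lemma natr_image_discrete (R : realType) (K : set nat) :
  discrete_subset ((fun k : nat => k%:R : R) @` K).
Proof.
have natr_close (j k : nat) : `|j%:R - k%:R : R| < 1 -> j = k.
  wlog kj : j k / (k <= j)%N.
    move=> near; have [/near//|/ltnW jk] := leqP k j.
    by rewrite distrC => /(near _ _ jk).
  rewrite -natrB // normr_nat -[1]/(1%:R) ltr_nat ltnS leqn0 subn_eq0 => jk.
  by apply/eqP; rewrite eqn_leq jk.
move=> x.
have [[k /andP[k_pos k_near]] | far] :=
  pselect (exists k : nat, 0 < `|k%:R - x| < 2^-1).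
  exists `|k%:R - x| => // _ [j _ <-] jx; exfalso.
  have jk : j = k.
    by apply: natr_close; have := ler_distD x j%:R k%:R; rewrite (distrC x); lra.
  by move: jx; rewrite jk ltxx.
exists 2^-1 => [|_ [j _ <-] jx]; first lra.
have [//|j_ne_x] := eqVneq j%:R x; exfalso; apply: far.
by exists j; rewrite jx andbT normr_gt0 subr_eq0.
Qed.

Lemma star_shaped_contractible (R : realType) (V : normedModType R)
    (A : set V) (c : V) :
  A c -> (forall x t, A x -> 0 <= t <= 1 -> A ((1 - t) *: x + t *: c)) ->
  contractible_subset R A.
Proof.
move=> Ac star; exists c => //.
exists (fun p : V * R => (1 - p.2) *: p.1 + p.2 *: c); split.
- apply: continuous_subspaceT => p.
  apply: (@continuousD _ _ _ (fun p : V * R => (1 - p.2) *: p.1) (fun p => p.2 *: c)).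
    apply: continuousZ; last exact: cvg_fst.
    by apply: continuousB; [exact: cst_continuous | exact: cvg_snd].
  by apply: continuousZ; [exact: cvg_snd | exact: cst_continuous].
- by move=> x t Ax; rewrite in_itv /= => /(star _ _ Ax).
- by move=> x _ /=; rewrite subr0 scale1r scale0r addr0.
- by move=> x _ /=; rewrite subrr scale0r add0r scale1r.
Qed.

Section Thickening.

Variable R : realType.

Definition pt (a b : R) : 'rV[R]_2 := \row_(j < 2) if j == 0 then a else b.

Definition thicken (A : set R) : set 'rV[R]_2 :=
  [set v | A (v 0 0) /\ v 0 1 = 0] `|` [set v | 0 < v 0 1].

Lemma thicken0 (A : set R) : A 0 -> thicken A 0.
Proof. by left; rewrite /= !(@mxE R 1 2). Qed.

Lemma thicken_contractible (A : set R) : contractible_subset R (thicken A).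
Proof.
apply: (@star_shaped_contractible _ _ _ (pt 0 1)) => [|x t Ax /andP[t_ge0 t_le1]].
  by right; rewrite /= mxE.
have [->|t_neq0] := eqVneq t 0; first by rewrite subr0 scale1r scale0r addr0.
have x_ge0 : 0 <= x 0 1 by case: Ax => [[_ ->]|/ltW].
have t_gt0 : 0 < t by rewrite lt0r t_neq0.
right; rewrite /= !mxE /= mulr1.
have : 0 <= (1 - t) * x 0 1 by rewrite mulr_ge0 // subr_ge0.
lra.
Qed.

Lemma minkowski_sum_thicken (n : nat) (X : 'I_n -> set R) (s : {set 'I_n}) (mu : R) :
  minkowski_sum (fun i => thicken (X i)) s (pt mu 0) <-> minkowski_sum X s mu.
Proof.
split=> [[x [xX sum_x]]|[y [yX ->]]]; last first.
  exists (fun i => pt (y i) 0); split=> [i si|].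
    by left; rewrite /= !mxE; split=> //; apply: yX.
  apply/rowP => j; rewrite summxE.
  have -> : \sum_(i in s) pt (y i) 0 0 j =
            \sum_(i in s) (if j == 0 then y i else 0).
    by apply: eq_bigr => i _; rewrite mxE.
  by rewrite mxE; case: ifP => _ //; rewrite big1.
have height0 : \sum_(i in s) x i 0 1 = 0.
  by have := congr1 (fun v : 'rV_2 => v 0 1) sum_x; rewrite /= summxE !mxE.
have height_ge0 i : i \in s -> 0 <= x i 0 1 by move=> /xX [[_ ->]|/ltW].
have flat := psumr_eq0P height_ge0 height0.
exists (fun i => x i 0 0); split=> [i si|].
  by case: (xX i si) => [[]//|/=]; rewrite flat // ltxx.
by have := congr1 (fun v : 'rV_2 => v 0 0) sum_x; rewrite /= summxE !mxE.
Qed.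

Lemma minkowski_complex_thicken (n : nat) (X : 'I_n -> set R) (mu : R) :
  minkowski_complex (fun i => thicken (X i)) (pt mu 0) = minkowski_complex X mu.
Proof.
by apply/seteqP; split=> s /= nsum /minkowski_sum_thicken.
Qed.

End Thickening.

Lemma discrete_minkowski_realization (R : realType) (n : nat) (D : set {set 'I_n}) :
  simplicial_complex D ->
  exists (X : 'I_n -> set R) (mu : R),
    (forall i, discrete_subset (X i) /\ X i 0) /\ D = minkowski_complex X mu.
Proof.
move=> D_simplicial; pose natr (k : nat) : R := k%:R.
have [D0|nD0] := pselect (D finset.set0); last first.
  exists (fun=> natr @` [set 0%N]), 0; split=> [i|].
    by split; [exact: natr_image_discrete | exists 0%N].
  rewrite minkowski_complex0 => [|i]; last by exists 0%N.
  apply/seteqP; split=> // s Ds; apply: nD0.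
  exact: D_simplicial Ds (finset.sub0set s).
exists (fun i => natr @` vertex_codes D i), (natr (code 1 [set: 'I_n])).
split=> [i|].
  split; first exact: natr_image_discrete.
  exists 0%N => //; exists 0%N, finset.set0; split; first by left; rewrite finset.sub0set.
  by rewrite /code mul0n big1 // => j _; rewrite inE.
apply/seteqP; split=> s /=.
  by move=> Ds /minkowski_sum_natr /(sum_vertex_codesP D_simplicial D0).
move=> nsum; apply: contrapT => nDs; apply: nsum.
exact/minkowski_sum_natr/(sum_vertex_codesP D_simplicial D0).
Qed.

Theorem proposition7 (R : realType) (n : nat) (D : set {set 'I_n}) :
  simplicial_complex D ->
  (exists (X : 'I_n -> set R) (mu : R),
      (forall i, discrete_subset (X i) /\ X i 0) /\
      D = minkowski_complex X mu) /\
  (exists (X : 'I_n -> set 'rV[R]_2) (mu : 'rV[R]_2),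
      (forall i, contractible_subset R (X i) /\ X i 0) /\
      D = minkowski_complex X mu).
Proof.
move=> D_simplicial.
have [X [mu [X_discrete ->]]] := discrete_minkowski_realization R D_simplicial.
split; first by exists X, mu.
exists (fun i => thicken (X i)), (pt mu 0).
split; last by rewrite minkowski_complex_thicken.
by move=> i; split; [exact: thicken_contractible | exact/thicken0/(X_discrete i).2].
Qed.
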